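(* Let $m,n\geq 0$ be integers. Then \[ \sum_{k=1}^{n}\frac{(q/z;q)_{k}(z;q)_{n-k}(z;q)_m}{(q;q)_k (q;q)_{n-k}(q^k;q)_{m+1}}z^k -\sum_{k=1}^{m}\frac{(q/z;q)_{k}(z;q)_{m-k}(z;q)_n}{(q;q)_k (q;q)_{m-k}(q^k;q)_{n+1}}z^k \] \[ =\frac{(1-zq^{-1})(z;q)_m(z;q)_n}{(q;q)_{m}(q;q)_{n}}\left(\sum_{k=1}^m\frac{q^k}{(1-zq^{k-1})(1-q^k)}-\sum_{k=1}^n\frac{q^k}{(1-zq^{k-1})(1-q^k)}\right). \]
   Context: For $N\geq 0$, $(x;q)_N=(1-x)(1-xq)\cdots(1-xq^{N-1})$ (with $(x;q)_0=1$). The identity is one of rational functions in $q$ and $z$. *)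

From mathcomp Require Import all_boot all_order all_algebra.
Set Implicit Arguments. Unset Strict Implicit. Unset Printing Implicit Defensive.
Import Order.TTheory GRing.Theory Num.Theory.
Local Open Scope ring_scope.

Definition qpoch (K : fieldType) (x q : K) (N : nat) : K :=
  \prod_(i < N) (1 - x * q ^+ i).

From mathcomp Require Import all_boot all_order all_algebra.
From mathcomp Require Import ring zify.
Import GRing.Theory.
Local Open Scope ring_scope.

(* Put phi(a, b; w) = sum_(k = 0..b) c_(b,k) (zw;q)_a / (q^k w;q)_(a+1) with
   c_(b,k) = (q/z;q)_k z^k (z;q)_(b-k) / ((q;q)_k (q;q)_(b-k)).  Partial fractions
   give a first-order recurrence in a relating phi(a+1, b; w) to phi(a, b; w) and
   phi(a, b; qw); the same recurrence holds in b up to a telescoping sum over k,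
   whose boundary term vanishes when the sum starts at k = 0.  Hence, by
   induction, phi(a, b; w) = phi(b, a; w).  The two sums of the theorem are
   phi(m, n; 1) and phi(n, m; 1) without their k = 0 terms; the two recurrences at
   w = 1 together with the symmetry at w = q express their difference at
   (m + 1, n) through the difference at (m, n), and the identity follows by
   induction on m starting from the trivial case m = n. *)

Lemma qpoch0 {K : fieldType} (x q : K) : qpoch x q 0 = 1.
Proof. by rewrite /qpoch big_ord0. Qed.

Lemma qpochS {K : fieldType} (x q : K) N :
  qpoch x q N.+1 = qpoch x q N * (1 - x * q ^+ N).
Proof. by rewrite /qpoch big_ord_recr. Qed.

Lemma qpochSl {K : fieldType} (x q : K) N :
  qpoch x q N.+1 = (1 - x) * qpoch (x * q) q N.
Proof.
rewrite /qpoch big_ord_recl /= expr0 mulr1; congr (_ * _).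
by apply: eq_bigr => i _; rewrite /bump /= exprS mulrA.
Qed.

Lemma qpoch_shift {K : fieldType} (x q : K) N :
  (1 - x) * qpoch (x * q) q N = qpoch x q N * (1 - x * q ^+ N).
Proof. by rewrite -qpochSl qpochS. Qed.

Lemma qpoch_neq0 {K : fieldType} (x q : K) N :
  (forall i, (i < N)%N -> 1 - x * q ^+ i != 0) -> qpoch x q N != 0.
Proof. by move=> h; apply/prodf_neq0 => i _; apply: h. Qed.

Lemma qpoch_factor_neq0 {K : fieldType} {x q : K} {N i : nat} :
  qpoch x q N != 0 -> (i < N)%N -> 1 - x * q ^+ i != 0.
Proof.
move=> hN hi; apply: contraNneq hN => h0.
by rewrite /qpoch (bigD1 (Ordinal hi)) //= h0 mul0r.
Qed.

Lemma qpoch_neq0_le {K : fieldType} {x q : K} {M N : nat} :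
  (M <= N)%N -> qpoch x q N != 0 -> qpoch x q M != 0.
Proof.
move=> hMN hN; apply: qpoch_neq0 => i hi.
by apply: (qpoch_factor_neq0 hN); apply: leq_trans hMN.
Qed.

Lemma qpoch_div_expr {K : fieldType} (q z : K) k : z != 0 ->
  qpoch (q / z) q k * z ^+ k = \prod_(j < k) (z - q ^+ j.+1).
Proof.
move=> hz; rewrite /qpoch -[in z ^+ k](card_ord k) -prodr_const -big_split /=.
by apply: eq_bigr => i _; rewrite exprS; field.
Qed.

Section PhiSeries.
Context {K : fieldType} (q z : K).

(* [phi_coef b k] is c_(b,k): the product is (q/z;q)_k z^k by [qpoch_div_expr],
   so [phi 1 m n 1] is the first sum of the theorem ([phi_term1E]). *)
Definition phi_coef (b k : nat) : K :=
  (\prod_(j < k) (z - q ^+ j.+1)) * qpoch z q (b - k)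
  / (qpoch q q k * qpoch q q (b - k)).

Definition phi_term (a b : nat) (w : K) (k : nat) : K :=
  phi_coef b k * (qpoch (z * w) q a / qpoch (q ^+ k * w) q a.+1).

Definition phi (lo a b : nat) (w : K) : K := \sum_(lo <= k < b.+1) phi_term a b w k.

Definition phi_boundary (a b : nat) (w : K) (j : nat) : K :=
  - (q ^+ b.+1 / q ^+ j) * (1 - q ^+ j) * phi_term a b.+1 w j.

Lemma qpoch_ends_neq0 (x : K) N : qpoch x q N.+2 != 0 ->
  [/\ 1 - x != 0, qpoch (x * q) q N != 0 & 1 - x * q * q ^+ N != 0].
Proof. by rewrite qpochSl qpochS !mulf_eq0 !negb_or => /and3P. Qed.

Lemma phi_term_recl a b w k : qpoch (q ^+ k * w) q a.+2 != 0 ->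
  (1 - q ^+ a.+1) * phi_term a.+1 b w k =
  (1 - z * w * q ^+ a) * phi_term a b w k
  - q ^+ a.+1 * ((1 - z * w) * phi_term a b (q * w) k).
Proof.
(* (1 - c) / ((1 - x) (1 - x c)) = 1 / (1 - x) - c / (1 - x c)
   with x = q^k w and c = q^(a+1). *)
move=> /qpoch_ends_neq0[hw0 hwa hwb].
rewrite /phi_term [(1 - z * w) * _]mulrCA [(1 - z * w) * (_ / _)]mulrA.
have -> : z * (q * w) = z * w * q by ring.
have -> : q ^+ k * (q * w) = q ^+ k * w * q by ring.
rewrite qpoch_shift [qpoch (z * w) q a.+1]qpochS [qpoch _ q a.+2]qpochSl.
rewrite [qpoch (q ^+ k * w * q) q a.+1]qpochS [qpoch _ q a.+1]qpochSl exprS.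
by field; rewrite hw0 hwa hwb.
Qed.

Lemma phi_term_recr a b w k : q != 0 -> (k <= b)%N ->
  qpoch q q b.+1 != 0 -> qpoch (q ^+ k * w) q a.+2 != 0 ->
  (1 - q ^+ b.+1) * phi_term a b.+1 w k - (1 - z * w * q ^+ b) * phi_term a b w k
  + q ^+ b.+1 * ((1 - z * w) * phi_term a b (q * w) k)
  = phi_boundary a b w k.+1 - phi_boundary a b w k.
Proof.
move=> hq0 /subnKC <-; set d := (b - k)%N => hqq /qpoch_ends_neq0[].
have -> : q ^+ k * w * q = q ^+ k.+1 * w by rewrite exprSr; ring.
move=> hw0 hwa hwb.
have hqk : qpoch q q k != 0 by apply: qpoch_neq0_le hqq; rewrite leqW ?leq_addr.
have hqd : qpoch q q d != 0 by apply: qpoch_neq0_le hqq; rewrite leqW ?leq_addl.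
have hqk1 : 1 - q * q ^+ k != 0.
  by apply: qpoch_factor_neq0 hqq _; rewrite ltnS leq_addr.
have hqd1 : 1 - q * q ^+ d != 0.
  by apply: qpoch_factor_neq0 hqq _; rewrite ltnS leq_addl.
rewrite /phi_boundary /phi_term [(1 - z * w) * _]mulrCA [(1 - z * w) * (_ / _)]mulrA.
have -> : z * (q * w) = z * w * q by ring.
have -> : q ^+ k * (q * w) = q ^+ k.+1 * w by rewrite exprSr; ring.
rewrite qpoch_shift [qpoch (q ^+ k * w) q a.+1]qpochSl.
have -> : q ^+ k * w * q = q ^+ k.+1 * w by rewrite exprSr; ring.
rewrite /phi_coef -addnS addKn addnS subSS !addKn big_ord_recr /= !qpochS.
move: hw0 hwa hwb hqk1; rewrite !exprSr !exprD => hw0 hwa hwb hqk1.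
by field; rewrite hwa hw0 hqd1 hqd hqk expf_neq0 // hwb hqk1 hq0.
Qed.

Definition shift_regular (lo N : nat) (w : K) :=
  forall j, (lo <= j <= N)%N -> 1 - q ^+ j * w != 0.

Lemma shift_regular_le lo M N w :
  (M <= N)%N -> shift_regular lo N w -> shift_regular lo M w.
Proof. by move=> hMN h j /andP[hj1 hj2]; apply: h; rewrite hj1 (leq_trans hj2). Qed.

Lemma shift_regular_mul lo N w :
  shift_regular lo N.+1 w -> shift_regular lo N (q * w).
Proof. by move=> h j hj; rewrite mulrA -exprSr; apply: h; lia. Qed.

Lemma shift_regular_qpoch {lo N w} a k : shift_regular lo N w ->
  (lo <= k)%N -> (k + a.+1 <= N)%N -> qpoch (q ^+ k * w) q a.+2 != 0.
Proof.
move=> h hk hka; apply: qpoch_neq0 => i hi.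
by rewrite mulrAC -exprD; apply: h; lia.
Qed.

Lemma phi_recl lo a b w : shift_regular lo (a + b).+1 w ->
  (1 - q ^+ a.+1) * phi lo a.+1 b w =
  (1 - z * w * q ^+ a) * phi lo a b w - q ^+ a.+1 * ((1 - z * w) * phi lo a b (q * w)).
Proof.
move=> hw; rewrite /phi !mulr_sumr -sumrB; apply: eq_big_nat => k /andP[hk1 hk2].
by apply: phi_term_recl; apply: (shift_regular_qpoch _ _ hw); lia.
Qed.

Lemma phi_recr lo a b w : q != 0 -> (lo <= b.+1)%N ->
  qpoch q q b.+1 != 0 -> shift_regular lo (a + b).+1 w ->
  (1 - q ^+ b.+1) * phi lo a b.+1 w =
  (1 - z * w * q ^+ b) * phi lo a b w - q ^+ b.+1 * ((1 - z * w) * phi lo a b (q * w))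
  - phi_boundary a b w lo.
Proof.
move=> hq0 hlo hqq hw.
have telescope : \sum_(lo <= k < b.+1)
   ((1 - q ^+ b.+1) * phi_term a b.+1 w k - (1 - z * w * q ^+ b) * phi_term a b w k
    + q ^+ b.+1 * ((1 - z * w) * phi_term a b (q * w) k))
   = phi_boundary a b w b.+1 - phi_boundary a b w lo.
  apply: telescope_sumr_eq => // k /andP[hk1 hk2].
  by apply: phi_term_recr => //; apply: (shift_regular_qpoch _ _ hw); lia.
have last : phi_boundary a b w b.+1 = - ((1 - q ^+ b.+1) * phi_term a b.+1 w b.+1).
  by rewrite /phi_boundary divff ?expf_neq0 // mulN1r mulNr.
rewrite /phi big_nat_recr //= mulrDr.
move: telescope; rewrite last !big_split /= sumrN -!mulr_sumr.
set S1 := \sum_(lo <= k < b.+1) phi_term a b.+1 w k.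
set S2 := \sum_(lo <= k < b.+1) phi_term a b w k.
set S3 := \sum_(lo <= k < b.+1) phi_term a b (q * w) k.
move=> telescope.
have -> : (1 - q ^+ b.+1) * S1 = (1 - q ^+ b.+1) * S1 - (1 - z * w * q ^+ b) * S2
    + q ^+ b.+1 * ((1 - z * w) * S3) + (1 - z * w * q ^+ b) * S2
    - q ^+ b.+1 * ((1 - z * w) * S3) by ring.
by rewrite telescope; ring.
Qed.

Lemma phi_boundary0 a b w : phi_boundary a b w 0 = 0.
Proof. by rewrite /phi_boundary expr0 subrr mulr0 mul0r. Qed.

Lemma phi0_symS a b w : q != 0 ->
  qpoch q q (a + b).+1 != 0 -> shift_regular 0 (a + b).+1 w ->
  phi 0 a b w = phi 0 b a w -> phi 0 a b (q * w) = phi 0 b a (q * w) ->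
  phi 0 a.+1 b w = phi 0 b a.+1 w.
Proof.
move=> hq0 hqq hw e1 e2.
have hqa : 1 - q ^+ a.+1 != 0.
  by rewrite exprS; apply: qpoch_factor_neq0 hqq _; rewrite ltnS leq_addr.
apply: (mulfI hqa); rewrite phi_recl // phi_recr ?phi_boundary0 ?subr0 ?e1 ?e2 //.
- by apply: qpoch_neq0_le hqq; rewrite ltnS leq_addr.
- by rewrite addnC.
Qed.

Lemma phi0_sym a b w : q != 0 ->
  qpoch q q (a + b) != 0 -> shift_regular 0 (a + b) w -> phi 0 a b w = phi 0 b a w.
Proof.
move=> hq0; elim: a b w => [|a IH] b w hqq hw.
  elim: b w hqq hw => [|b IHb] w // hqq hw.
  have hqb : qpoch q q b != 0 by apply: qpoch_neq0_le hqq.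
  symmetry; apply: phi0_symS; rewrite ?addn0 //; symmetry; apply: IHb => //.
  - exact: shift_regular_le hw.
  - exact: shift_regular_mul.
have hqab : qpoch q q (a + b) != 0 by apply: qpoch_neq0_le hqq.
apply: phi0_symS => //; apply: IH => //.
- exact: shift_regular_le hw.
- exact: shift_regular_mul.
Qed.

Lemma phi0E a b w : phi 0 a b w = phi_term a b w 0 + phi 1 a b w.
Proof. by rewrite /phi big_ltn. Qed.

Lemma phi1_sub_sym a b w : q != 0 ->
  qpoch q q (a + b) != 0 -> shift_regular 0 (a + b) w ->
  phi 1 a b w - phi 1 b a w = phi_term b a w 0 - phi_term a b w 0.
Proof.
move=> hq0 hqq hw; have := phi0_sym _ _ _ hq0 hqq hw; rewrite !phi0E => e.
by rewrite -(addKr (phi_term a b w 0) (phi 1 a b w)) e; ring.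
Qed.

Definition qratio (m : nat) : K := qpoch z q m / qpoch q q m.

Definition hsum (m : nat) : K :=
  \sum_(1 <= k < m.+1) q ^+ k / ((1 - z * q ^+ k.-1) * (1 - q ^+ k)).

Lemma phi_term0_shift a b :
  (1 - z) * phi_term a b q 0
  = qratio b * (qpoch z q a * (1 - z * q ^+ a) / qpoch q q a.+1).
Proof.
rewrite /phi_term /phi_coef /qratio subn0 big_ord0 qpoch0 expr0 !mul1r.
by rewrite mulrCA [(1 - z) * (_ / _)]mulrA qpoch_shift.
Qed.

Lemma phi_boundary11 a b : q != 0 -> 1 - q != 0 -> phi_boundary a b 1 1 =
  - q ^+ b * (z - q) * qratio b * (qpoch z q a / qpoch q q a.+1).
Proof.
move=> hq0 hq1; rewrite /phi_boundary /phi_term /phi_coef /qratio subSS subn0.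
rewrite big_ord1 [qpoch q q 1]qpochS qpoch0 !expr1 !mulr1 exprS.
(* Hiding these inverses keeps [field] from requiring them to be nonzero. *)
rewrite !invfM; set u := (qpoch q q b)^-1; set v := (qpoch q q a.+1)^-1.
by field; rewrite hq0 hq1 oner_eq0.
Qed.

Lemma shift_regular1 {N} : qpoch q q N != 0 -> shift_regular 1 N 1.
Proof.
move=> hqq j /andP[hj1 hjN]; rewrite mulr1 -(prednK hj1) exprS.
by apply: qpoch_factor_neq0 hqq _; rewrite prednK.
Qed.

Lemma shift_regular0_q {N} : qpoch q q N.+1 != 0 -> shift_regular 0 N q.
Proof. by move=> hqq j /andP[_ hjN]; rewrite mulrC; apply: qpoch_factor_neq0 hqq _. Qed.

Lemma phi1_diff_recl m n : q != 0 -> qpoch q q (m + n).+1 != 0 ->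
  (1 - q ^+ m.+1) * (phi 1 m.+1 n 1 - phi 1 n m.+1 1) =
  (1 - z * q ^+ m) * (phi 1 m n 1 - phi 1 n m 1)
  - q ^+ m.+1 * ((1 - z) * phi_term n m q 0 - (1 - z) * phi_term m n q 0)
  + phi_boundary n m 1 1.
Proof.
move=> hq0 hqq; have hw := shift_regular1 hqq.
have hsym := phi1_sub_sym m n q hq0
  (qpoch_neq0_le (leqnSn _) hqq) (shift_regular0_q hqq).
rewrite mulrBr phi_recl // phi_recr //; last by rewrite addnC.
  rewrite !mulr1 -[phi 1 m n q](subrK (phi 1 n m q)) hsym; ring.
by apply: qpoch_neq0_le hqq; rewrite ltnS leq_addr.
Qed.

Definition diff_identity (m n : nat) : Prop :=
  phi 1 m n 1 - phi 1 n m 1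
  = (1 - z * q^-1) * (qratio m * qratio n) * (hsum m - hsum n).

Lemma diff_identity_refl m : diff_identity m m.
Proof. by rewrite /diff_identity !subrr mulr0. Qed.

Lemma diff_identity_sym m n : diff_identity m n -> diff_identity n m.
Proof. by rewrite /diff_identity => e; rewrite -opprB e; ring. Qed.

Lemma diff_identity_step m n : q != 0 -> qpoch q q (m.+1 + n) != 0 ->
  1 - z * q ^+ m != 0 -> diff_identity m n -> diff_identity m.+1 n.
Proof.
move=> hq0 hqq hzm IH.
have hqm : 1 - q * q ^+ m != 0.
  by apply: qpoch_factor_neq0 hqq _; rewrite ltnS leq_addr.
have hqn : 1 - q * q ^+ n != 0.
  by apply: qpoch_factor_neq0 hqq _; rewrite addSn ltnS leq_addl.
have hq1 : 1 - q != 0 by rewrite -[q]mulr1 -(expr0 q); apply: qpoch_factor_neq0 hqq _.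
have hQm : qpoch q q m != 0 by apply: qpoch_neq0_le hqq; rewrite leqW ?leq_addr.
have hQn : qpoch q q n != 0 by apply: qpoch_neq0_le hqq; rewrite leqW ?leq_addl.
have hsumS : hsum m.+1 = hsum m + q ^+ m.+1 / ((1 - z * q ^+ m) * (1 - q ^+ m.+1)).
  by rewrite /hsum big_nat_recr.
apply: (mulfI (_ : 1 - q ^+ m.+1 != 0)); first by rewrite exprS.
rewrite /diff_identity phi1_diff_recl // IH !phi_term0_shift phi_boundary11 // hsumS.
rewrite /qratio !qpochS !exprS.
by field; rewrite hqm hzm hQn hQm hq0 hqn.
Qed.

Lemma diff_identity_ge m n : q != 0 -> qpoch q q (m + n) != 0 ->
  (forall j, (j < m)%N -> 1 - z * q ^+ j != 0) -> (n <= m)%N -> diff_identity m n.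
Proof.
move=> hq0; elim: m => [|m IH] hqq hz.
  by rewrite leqn0 => /eqP->; apply: diff_identity_refl.
rewrite leq_eqVlt => /predU1P[-> | hnm]; first exact: diff_identity_refl.
apply: diff_identity_step => //; first exact: hz.
apply: IH => //; first exact: qpoch_neq0_le (leqnSn _) hqq.
by move=> j hj; apply: hz; rewrite ltnS ltnW.
Qed.

Lemma phi_term1E a b k : z != 0 ->
  qpoch (q / z) q k * qpoch z q (b - k) * qpoch z q a
  / (qpoch q q k * qpoch q q (b - k) * qpoch (q ^+ k) q a.+1) * z ^+ k
  = phi_term a b 1 k.
Proof.
by move=> hz; rewrite /phi_term /phi_coef !mulr1 -qpoch_div_expr // !invfM; ring.
Qed.

End PhiSeries.

Theorem corollary6p1 (K : fieldType) (m n : nat) (q z : K)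
  (hq0 : q != 0) (hz0 : z != 0)
  (hq : forall j : nat, (0 < j <= m + n)%N -> q ^+ j != 1)
  (hz : forall j : nat, (j < maxn m n)%N -> z * q ^+ j != 1) :
  \sum_(1 <= k < n.+1)
      (qpoch (q / z) q k * qpoch z q (n - k) * qpoch z q m
       / (qpoch q q k * qpoch q q (n - k) * qpoch (q ^+ k) q m.+1)) * z ^+ k
  - \sum_(1 <= k < m.+1)
      (qpoch (q / z) q k * qpoch z q (m - k) * qpoch z q n
       / (qpoch q q k * qpoch q q (m - k) * qpoch (q ^+ k) q n.+1)) * z ^+ k
  = (1 - z * q^-1) * qpoch z q m * qpoch z q n / (qpoch q q m * qpoch q q n)
    * (\sum_(1 <= k < m.+1) q ^+ k / ((1 - z * q ^+ k.-1) * (1 - q ^+ k))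
       - \sum_(1 <= k < n.+1) q ^+ k / ((1 - z * q ^+ k.-1) * (1 - q ^+ k))).
Proof.
have hqq : qpoch q q (m + n) != 0.
  by apply: qpoch_neq0 => i hi; rewrite -exprS subr_eq0 eq_sym; apply: hq.
have hzq j : (j < maxn m n)%N -> 1 - z * q ^+ j != 0.
  by move=> hj; rewrite subr_eq0 eq_sym; apply: hz.
have hdiff : diff_identity q z m n.
  case: (leqP n m) => hnm.
  - by apply: diff_identity_ge => // j hj; apply: hzq; rewrite leq_max hj.
  - apply/diff_identity_sym/diff_identity_ge; rewrite 1?addnC ?(ltnW hnm) //.
    by move=> j hj; apply: hzq; rewrite leq_max hj orbT.
under eq_bigr do rewrite phi_term1E //.
under [X in _ - X]eq_bigr do rewrite phi_term1E //.
move: hdiff; rewrite /diff_identity /phi /hsum /qratio => ->.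
by rewrite !invfM; ring.
Qed.
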